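(* For any $a,b\ge0$, $$\lim_{n\to\infty}\Biggl(\sum_{i=0}^{\lfloor n/2\rfloor}\binom nia^ib^{n-i}\Biggr)^{1/n}=\begin{cases}a+b&\text{if }a\le b,\\ 2\sqrt{ab}&\text{if }a\ge b.\end{cases}$$
   Context: The convention $0^0=1$ is used in the terms $a^ib^{n-i}$. *)

From Stdlib Require Import Reals.
From Coquelicot Require Import Coquelicot.
Open Scope R_scope.

(* Nonnegative real n-th root: x^(1/n) for x > 0, and 0 for x <= 0
   (0^(1/n) = 0 for n >= 1; the value at n = 0 is irrelevant for a limit). *)
Definition nthroot (x : R) (n : nat) : R :=
  if Rlt_dec 0 x then Rpower x (/ INR n) else 0.

(* S_n(a,b) = sum_{i=0}^{floor(n/2)} C(n,i) a^i b^(n-i), with 0^0 = 1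
   (Stdlib's pow satisfies pow 0 0 = 1). *)
Definition half_binom_sum (a b : R) (n : nat) : R :=
  sum_n (fun i => Binomial.C n i * a ^ i * b ^ (n - i)) (Nat.div n 2).

From Stdlib Require Import Reals Lra Lia.
From Coquelicot Require Import Coquelicot.
Open Scope R_scope.

(* The binomial expansion of (a+b)^n has n+1 nonnegative terms, so up to
   factors polynomial in n both (a+b)^n and the half sum S_n are governed by
   their largest term, and polynomial factors disappear under the n-th root.
   If a <= b, the term of index k is at most the term of index n-k, so the
   largest term lies in the lower half and S_n is comparable to (a+b)^n.
   If a >= b, the terms of the lower half satisfy
   a^i b^(n-i) = (ab)^i b^(n-2i) <= sqrt(ab)^n, while the central term is at
   least C(n, n/2) (b / sqrt(ab)) sqrt(ab)^n with C(n, n/2) >= 2^n/(n+1). *)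

Lemma div2_bounds n : (2 * (n / 2) <= n <= 2 * (n / 2) + 1)%nat.
Proof.
  pose proof (Nat.div_mod n 2 ltac:(lia)).
  pose proof (Nat.mod_upper_bound n 2 ltac:(lia)). lia.
Qed.

Lemma term_le_sum_f_R0 (f : nat -> R) k n :
  (forall i, 0 <= f i) -> (k <= n)%nat -> f k <= sum_f_R0 f n.
Proof.
  intros Hf Hk. induction n as [|n IH].
  - replace k with 0%nat by lia. simpl. lra.
  - rewrite tech5. destruct (Nat.eq_dec k (S n)) as [->|Hne].
    + pose proof (cond_pos_sum f n Hf). lra.
    + specialize (IH ltac:(lia)). specialize (Hf (S n)). lra.
Qed.

Lemma sum_f_R0_le_const (f : nat -> R) M n :
  (forall i, (i <= n)%nat -> f i <= M) -> sum_f_R0 f n <= INR (S n) * M.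
Proof. intros Hf. rewrite Rmult_comm, <- sum_cte. now apply sum_Rle. Qed.

Lemma C_pos n k : 0 < Binomial.C n k.
Proof.
  unfold Binomial.C. apply Rdiv_lt_0_compat; [apply INR_fact_lt_0|].
  apply Rmult_lt_0_compat; apply INR_fact_lt_0.
Qed.

Lemma C_le_pow2 n k : (k <= n)%nat -> Binomial.C n k <= 2 ^ n.
Proof.
  intros Hk. replace 2 with (1 + 1) by ring. rewrite binomial.
  replace (Binomial.C n k) with (Binomial.C n k * 1 ^ k * 1 ^ (n - k)) by (rewrite !pow1; ring).
  apply (term_le_sum_f_R0 (fun i => Binomial.C n i * 1 ^ i * 1 ^ (n - i))); [|exact Hk].
  intros i. rewrite !pow1, !Rmult_1_r. left. apply C_pos.
Qed.

Lemma C_le_C_S n k : (2 * k < n)%nat -> Binomial.C n k <= Binomial.C n (S k).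
Proof.
  intros Hk. rewrite pascal_step3 by lia.
  pose proof (C_pos n k).
  assert (HSk : 0 < INR (S k)) by (apply lt_0_INR; lia).
  assert (Hratio : 1 <= INR (n - k) / INR (S k)).
  { apply (Rmult_le_reg_r (INR (S k))); [exact HSk|].
    unfold Rdiv. rewrite Rmult_assoc, Rinv_l, Rmult_1_l, Rmult_1_r by lra.
    apply le_INR. lia. }
  rewrite <- (Rmult_1_l (Binomial.C n k)) at 1. apply Rmult_le_compat_r; lra.
Qed.

Lemma C_le_C_half n k : (k <= n)%nat -> Binomial.C n k <= Binomial.C n (n / 2).
Proof.
  pose proof (div2_bounds n) as Hn.
  assert (Hlow : forall j, (j <= n / 2)%nat -> Binomial.C n (n / 2 - j) <= Binomial.C n (n / 2)).
  { induction j as [|j IH]; intros Hj.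
    - rewrite Nat.sub_0_r. lra.
    - apply Rle_trans with (Binomial.C n (S (n / 2 - S j))); [apply C_le_C_S; lia|].
      replace (S (n / 2 - S j)) with (n / 2 - j)%nat by lia. apply IH. lia. }
  intros Hk. destruct (Nat.le_gt_cases k (n / 2)) as [Hk2|Hk2].
  - replace k with (n / 2 - (n / 2 - k))%nat by lia. apply Hlow. lia.
  - rewrite pascal_step1 by lia.
    replace (n - k)%nat with (n / 2 - (n / 2 - (n - k)))%nat by lia.
    apply Hlow. lia.
Qed.

Lemma pow2_le_C_half n : 2 ^ n <= INR (S n) * Binomial.C n (n / 2).
Proof.
  replace 2 with (1 + 1) by ring. rewrite binomial. apply sum_f_R0_le_const.
  intros i Hi. rewrite !pow1, !Rmult_1_r. now apply C_le_C_half.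
Qed.

Lemma is_lim_seq_inv_INR : is_lim_seq (fun n => / INR n) 0.
Proof.
  replace (Finite 0) with (Rbar_inv p_infty) by reflexivity.
  apply is_lim_seq_inv; [apply is_lim_seq_INR | discriminate].
Qed.

Lemma is_lim_seq_ln_succ_div : is_lim_seq (fun n => ln (INR n + 1) / INR n) 0.
Proof.
  assert (Hdiv : is_lim_seq (fun n => ln (INR n + 1) / (INR n + 1)) 0).
  { apply (is_lim_comp_seq (fun y => ln y / y) (fun n => INR n + 1) p_infty 0).
    - apply is_lim_div_ln_p.
    - exists 0%nat. intros; discriminate.
    - apply is_lim_seq_ext with (fun n => INR (S n)); [intros; apply S_INR|].
      apply (is_lim_seq_incr_1 INR p_infty), is_lim_seq_INR. }
  assert (Hratio : is_lim_seq (fun n => 1 + / INR n) (1 + 0)).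
  { apply is_lim_seq_plus'; [apply is_lim_seq_const | apply is_lim_seq_inv_INR]. }
  pose proof (is_lim_seq_mult' _ _ _ _ Hdiv Hratio) as H.
  rewrite Rmult_0_l in H.
  apply is_lim_seq_ext_loc with (2 := H). exists 1%nat. intros n Hn.
  assert (0 < INR n) by (apply lt_0_INR; lia). field. lra.
Qed.

Lemma nthroot_exp_ln x n : 0 < x -> nthroot x n = exp (ln x / INR n).
Proof.
  intros Hx. unfold nthroot, Rpower. destruct (Rlt_dec 0 x); [|lra].
  f_equal. unfold Rdiv. ring.
Qed.

Lemma nthroot_nonpos x n : x <= 0 -> nthroot x n = 0.
Proof. intros Hx. unfold nthroot. destruct (Rlt_dec 0 x); lra. Qed.

Lemma ln_div_INR_bounds (x L c : R) n : 0 < L -> 0 < c -> (1 <= n)%nat ->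
  c * L ^ n <= (INR n + 1) * x -> x <= (INR n + 1) * L ^ n ->
  ln L + ln c * / INR n - ln (INR n + 1) / INR n <= ln x / INR n
  <= ln L + ln (INR n + 1) / INR n.
Proof.
  intros HL Hc Hn Hlo Hhi.
  assert (HN : 0 < INR n) by (apply lt_0_INR; lia).
  assert (HLn : 0 < L ^ n) by (apply pow_lt; lra).
  assert (HcLn : 0 < c * L ^ n) by (apply Rmult_lt_0_compat; lra).
  assert (Hx : 0 < x) by nra.
  pose proof (ln_le _ _ HcLn Hlo) as Alo.
  pose proof (ln_le _ _ Hx Hhi) as Ahi.
  rewrite ln_mult, ln_pow in Alo by lra. rewrite ln_mult in Alo by lra.
  rewrite ln_mult, ln_pow in Ahi by lra.
  assert (Hinv : 0 <= / INR n) by (left; apply Rinv_0_lt_compat; exact HN).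
  unfold Rdiv. split.
  - replace (ln L + ln c * / INR n - ln (INR n + 1) * / INR n)
      with ((ln c + INR n * ln L - ln (INR n + 1)) * / INR n) by (field; lra).
    apply Rmult_le_compat_r; lra.
  - replace (ln L + ln (INR n + 1) * / INR n)
      with ((ln (INR n + 1) + INR n * ln L) * / INR n) by (field; lra).
    apply Rmult_le_compat_r; lra.
Qed.

Lemma is_lim_seq_nthroot_squeeze (x : nat -> R) (c L : R) : 0 < c -> 0 < L ->
  (forall n, (1 <= n)%nat ->
     c * L ^ n <= (INR n + 1) * x n /\ x n <= (INR n + 1) * L ^ n) ->
  is_lim_seq (fun n => nthroot (x n) n) L.
Proof.
  intros Hc HL Hx.
  assert (Hln : is_lim_seq (fun n => ln (x n) / INR n) (ln L)).
  { apply is_lim_seq_le_le_loc with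
      (fun n => ln L + ln c * / INR n - ln (INR n + 1) / INR n)
      (fun n => ln L + ln (INR n + 1) / INR n).
    - exists 1%nat. intros n Hn. destruct (Hx n Hn) as [Hlo Hhi].
      exact (ln_div_INR_bounds _ _ _ _ HL Hc Hn Hlo Hhi).
    - assert (H : is_lim_seq (fun n => ln L + ln c * / INR n - ln (INR n + 1) / INR n)
                               (ln L + ln c * 0 - 0)).
      { apply is_lim_seq_minus'; [|apply is_lim_seq_ln_succ_div].
        apply is_lim_seq_plus'; [apply is_lim_seq_const|].
        apply is_lim_seq_mult'; [apply is_lim_seq_const | apply is_lim_seq_inv_INR]. }
      now replace (ln L + ln c * 0 - 0) with (ln L) in H by ring.
    - assert (H : is_lim_seq (fun n => ln L + ln (INR n + 1) / INR n) (ln L + 0)).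
      { apply is_lim_seq_plus'; [apply is_lim_seq_const | apply is_lim_seq_ln_succ_div]. }
      now rewrite Rplus_0_r in H. }
  rewrite <- (exp_ln L) by exact HL.
  apply is_lim_seq_ext_loc with (fun n => exp (ln (x n) / INR n)).
  - exists 1%nat. intros n Hn. symmetry. apply nthroot_exp_ln.
    destruct (Hx n Hn) as [Hlo _].
    assert (0 < c * L ^ n) by (apply Rmult_lt_0_compat; [|apply pow_lt]; lra).
    pose proof (pos_INR n). nra.
  - apply is_lim_seq_continuous; [|exact Hln].
    apply derivable_continuous_pt, derivable_pt_exp.
Qed.

Definition binom_term (a b : R) (n i : nat) : R := Binomial.C n i * a ^ i * b ^ (n - i).

Lemma binom_term_nonneg a b n i : 0 <= a -> 0 <= b -> 0 <= binom_term a b n i.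
Proof.
  intros ha hb. unfold binom_term. pose proof (C_pos n i).
  apply Rmult_le_pos; [apply Rmult_le_pos|]; try apply pow_le; lra.
Qed.

Lemma binomial_binom_term a b n : (a + b) ^ n = sum_f_R0 (binom_term a b n) n.
Proof. apply binomial. Qed.

Lemma half_binom_sum_Rsum a b n :
  half_binom_sum a b n = sum_f_R0 (binom_term a b n) (n / 2).
Proof. unfold half_binom_sum. now rewrite sum_n_Reals. Qed.

Lemma binom_term_le_half_binom_sum a b n k : 0 <= a -> 0 <= b -> (k <= n / 2)%nat ->
  binom_term a b n k <= half_binom_sum a b n.
Proof.
  intros ha hb Hk. rewrite half_binom_sum_Rsum.
  apply term_le_sum_f_R0; [intros; now apply binom_term_nonneg | exact Hk].
Qed.

Lemma half_binom_sum_le a b n M : 0 <= M ->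
  (forall i, (i <= n / 2)%nat -> binom_term a b n i <= M) ->
  half_binom_sum a b n <= (INR n + 1) * M.
Proof.
  intros HM Hterm. rewrite half_binom_sum_Rsum.
  eapply Rle_trans; [exact (sum_f_R0_le_const _ M _ Hterm)|].
  apply Rmult_le_compat_r; [exact HM|].
  rewrite <- S_INR. apply le_INR. pose proof (div2_bounds n). lia.
Qed.

Lemma half_binom_sum_0_nonpos a n : (1 <= n)%nat -> half_binom_sum a 0 n <= 0.
Proof.
  intros Hn. apply Rle_trans with ((INR n + 1) * 0); [|lra].
  apply half_binom_sum_le; [lra|]. intros i Hi.
  unfold binom_term. pose proof (div2_bounds n). rewrite (pow_i (n - i)) by lia. lra.
Qed.

Lemma pow_add_le_swap a b j d : 0 <= a <= b ->
  a ^ (j + d) * b ^ j <= a ^ j * b ^ (j + d).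
Proof.
  intros Hab. rewrite !pow_add.
  replace (a ^ j * a ^ d * b ^ j) with ((a ^ j * b ^ j) * a ^ d) by ring.
  replace (a ^ j * (b ^ j * b ^ d)) with ((a ^ j * b ^ j) * b ^ d) by ring.
  apply Rmult_le_compat_l; [apply Rmult_le_pos; apply pow_le; lra|].
  apply pow_incr. lra.
Qed.

Lemma binom_term_le_mirror a b n k : 0 <= a <= b -> (n <= 2 * k)%nat -> (k <= n)%nat ->
  binom_term a b n k <= binom_term a b n (n - k).
Proof.
  intros Hab H2k Hk. unfold binom_term.
  rewrite (pascal_step1 n k Hk).
  replace (n - (n - k))%nat with k by lia.
  rewrite !Rmult_assoc. apply Rmult_le_compat_l; [left; apply C_pos|].
  set (d := (2 * k - n)%nat).
  replace (a ^ k) with (a ^ (n - k + d)) by (f_equal; lia).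
  replace (b ^ k) with (b ^ (n - k + d)) by (f_equal; lia).
  now apply pow_add_le_swap.
Qed.

Lemma binomial_le_half_binom_sum a b n : 0 <= a <= b ->
  (a + b) ^ n <= (INR n + 1) * half_binom_sum a b n.
Proof.
  intros Hab. rewrite binomial_binom_term, <- S_INR.
  apply sum_f_R0_le_const. intros k Hk.
  destruct (Nat.le_gt_cases k (n / 2)) as [Hk2|Hk2].
  - apply binom_term_le_half_binom_sum; [lra | lra | exact Hk2].
  - pose proof (div2_bounds n).
    eapply Rle_trans; [apply binom_term_le_mirror; [lra | lia | lia]|].
    apply binom_term_le_half_binom_sum; [lra | lra | lia].
Qed.

Lemma half_binom_sum_le_binomial a b n : 0 <= a -> 0 <= b ->
  half_binom_sum a b n <= (INR n + 1) * (a + b) ^ n.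
Proof.
  intros ha hb. apply half_binom_sum_le; [apply pow_le; lra|].
  intros i Hi. rewrite binomial_binom_term.
  apply term_le_sum_f_R0; [intros; now apply binom_term_nonneg|].
  pose proof (div2_bounds n). lia.
Qed.

Lemma pow_mul_pow_sqrt a b n i : 0 <= a -> 0 <= b -> (2 * i <= n)%nat ->
  a ^ i * b ^ (n - i) = sqrt (a * b) ^ (2 * i) * b ^ (n - 2 * i).
Proof.
  intros ha hb Hi.
  rewrite pow_mult, pow2_sqrt by (apply Rmult_le_pos; lra).
  replace (n - i)%nat with (i + (n - 2 * i))%nat by lia.
  rewrite pow_add, Rpow_mult_distr. ring.
Qed.

Lemma le_sqrt_mul a b : 0 <= b <= a -> b <= sqrt (a * b).
Proof.
  intros Hab. rewrite <- (sqrt_square b) at 1 by lra.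
  apply sqrt_le_1_alt. apply Rmult_le_compat_r; lra.
Qed.

Lemma pow_mul_pow_le_sqrt a b n i : 0 <= b <= a -> (2 * i <= n)%nat ->
  a ^ i * b ^ (n - i) <= sqrt (a * b) ^ n.
Proof.
  intros Hab Hi. rewrite pow_mul_pow_sqrt by (lra || lia).
  replace (sqrt (a * b) ^ n) with (sqrt (a * b) ^ (2 * i) * sqrt (a * b) ^ (n - 2 * i))
    by (rewrite <- pow_add; f_equal; lia).
  apply Rmult_le_compat_l; [apply pow_le, sqrt_pos|].
  apply pow_incr. split; [lra | now apply le_sqrt_mul].
Qed.

Lemma pow_mul_pow_ge_sqrt a b n i : 0 < b <= a -> (2 * i <= n <= 2 * i + 1)%nat ->
  b / sqrt (a * b) * sqrt (a * b) ^ n <= a ^ i * b ^ (n - i).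
Proof.
  intros Hab Hi. set (s := sqrt (a * b)).
  assert (Hs : 0 < s) by (apply sqrt_lt_R0; nra).
  assert (Hbs : b <= s) by (apply le_sqrt_mul; lra).
  rewrite pow_mul_pow_sqrt by (lra || lia). fold s.
  assert (Hsi : 0 < s ^ (2 * i)) by (apply pow_lt; lra).
  destruct (Nat.eq_dec n (2 * i)) as [->|Hodd].
  - rewrite Nat.sub_diag, Rmult_1_r.
    rewrite <- (Rmult_1_l (s ^ (2 * i))) at 2.
    apply Rmult_le_compat_r; [lra|].
    apply (Rmult_le_reg_r s); [exact Hs|]. field_simplify; lra.
  - replace (n - 2 * i)%nat with 1%nat by lia.
    replace n with (S (2 * i)) by lia. simpl. right. field. lra.
Qed.

Lemma half_binom_sum_le_sqrt a b n : 0 <= b <= a ->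
  half_binom_sum a b n <= (INR n + 1) * (2 * sqrt (a * b)) ^ n.
Proof.
  intros Hab. rewrite Rpow_mult_distr.
  apply half_binom_sum_le; [apply Rmult_le_pos; apply pow_le; [lra | apply sqrt_pos]|].
  intros i Hi. pose proof (div2_bounds n). unfold binom_term.
  rewrite Rmult_assoc. apply Rmult_le_compat.
  - left. apply C_pos.
  - apply Rmult_le_pos; apply pow_le; lra.
  - apply C_le_pow2. lia.
  - apply pow_mul_pow_le_sqrt; [lra | lia].
Qed.

Lemma sqrt_le_half_binom_sum a b n : 0 < b <= a ->
  b / sqrt (a * b) * (2 * sqrt (a * b)) ^ n <= (INR n + 1) * half_binom_sum a b n.
Proof.
  intros Hab. set (s := sqrt (a * b)).
  assert (Hs : 0 < s) by (apply sqrt_lt_R0; nra).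
  assert (HN : 0 < INR n + 1) by (pose proof (pos_INR n); lra).
  apply Rle_trans with ((INR n + 1) * binom_term a b n (n / 2)).
  2: { apply Rmult_le_compat_l; [lra|].
       apply binom_term_le_half_binom_sum; [lra | lra | lia]. }
  unfold binom_term.
  replace (b / s * (2 * s) ^ n) with (2 ^ n * (b / s * s ^ n))
    by (rewrite Rpow_mult_distr; ring).
  rewrite Rmult_assoc, <- (Rmult_assoc (INR n + 1)).
  apply Rmult_le_compat.
  - apply pow_le. lra.
  - apply Rmult_le_pos; [apply Rdiv_le_0_compat | apply pow_le]; lra.
  - rewrite <- S_INR. apply pow2_le_C_half.
  - apply pow_mul_pow_ge_sqrt; [lra | apply div2_bounds].
Qed.

Theorem lemmaA5 (a b : R) (ha : 0 <= a) (hb : 0 <= b) :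
  is_lim_seq (fun n : nat => nthroot (half_binom_sum a b n) n)
    (Finite (if Rle_dec a b then a + b else 2 * sqrt (a * b))).
Proof.
  destruct (Req_dec b 0) as [->|Hb0].
  - replace (if Rle_dec a 0 then a + 0 else 2 * sqrt (a * 0)) with 0
      by (destruct (Rle_dec a 0); [lra | rewrite Rmult_0_r, sqrt_0; ring]).
    apply is_lim_seq_ext_loc with (fun _ => 0); [|apply is_lim_seq_const].
    exists 1%nat. intros n Hn. symmetry.
    now apply nthroot_nonpos, half_binom_sum_0_nonpos.
  - destruct (Rle_dec a b) as [Hab|Hab].
    + apply (is_lim_seq_nthroot_squeeze _ 1); [lra | lra |]. intros n _. split.
      * rewrite Rmult_1_l. apply binomial_le_half_binom_sum. lra.
      * now apply half_binom_sum_le_binomial.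
    + assert (Hs : 0 < sqrt (a * b)) by (apply sqrt_lt_R0; nra).
      apply (is_lim_seq_nthroot_squeeze _ (b / sqrt (a * b)));
        [apply Rdiv_lt_0_compat; lra | lra |].
      intros n _. split.
      * apply sqrt_le_half_binom_sum. lra.
      * apply half_binom_sum_le_sqrt. lra.
Qed.
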